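(* Let $q$ be a power of an odd prime, $0<r_1<r_2<n$ integers, $a_1,a_2\in\mathbb{F}_{q^n}^*$ with the multiplicative order of $a_2$ dividing $q^{r_1}-1$, and $S(x)=a_1x^{q^{r_1}}+a_2x^{q^{r_2}}$. Then for each $t\in\{r_1,r_2\}$, $S(x)$ is a scattered polynomial of index $t$ over $\mathbb{F}_{q^n}$ if and only if $\gcd(r_2-r_1,n)=1$.
   Context: An $\mathbb{F}_q$-linearized polynomial $S\in\mathbb{F}_{q^n}[x]$ is a scattered polynomial of index $t$ over $\mathbb{F}_{q^n}$ if for all $y,z\in\mathbb{F}_{q^n}^*$, $\frac{S(y)}{y^{q^t}}=\frac{S(z)}{z^{q^t}}$ implies $y/z\in\mathbb{F}_q$. *)

From HB Require Import structures.
From mathcomp Require Import all_boot all_order all_algebra all_field.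
Set Implicit Arguments. Unset Strict Implicit. Unset Printing Implicit Defensive.
Import GRing.Theory.
Local Open Scope ring_scope.

(* L is an extension of the finite field F = F_q; F_q inside L is the
   subspace 1%VS = <[1]>%VS (the image of F). *)

Definition linbinomial (L : fieldType) (q r1 r2 : nat) (a1 a2 : L) : {poly L} :=
  a1 *: 'X^(q ^ r1) + a2 *: 'X^(q ^ r2).

Definition scattered (F : fieldType) (L : fieldExtType F) (q t : nat)
  (S : {poly L}) : Prop :=
  forall y z : L, y != 0 -> z != 0 ->
    S.[y] / y ^+ (q ^ t) = S.[z] / z ^+ (q ^ t) -> y / z \in 1%VS.

(* Dividing [S(y) = S(z)] by [y^(q^t)] resp. [z^(q^t)] for [t = r1] or [r2]
   shows that [S] is scattered iff every [u] with [u^(q^r1) = u^(q^r2)] lies in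
   [F_q], i.e. iff the fixed points of [x |-> x^(q^(r2 - r1))] in [F_(q^n)]
   are just [F_q].  These fixed points form [F_(q^g)] with [g = gcd(r2-r1, n)]:
   Bezout shows they are fixed by [x^q] when [g = 1], and when [g > 1] a
   primitive root of [F_(q^n)] yields an element of order [q^g - 1] fixed by
   [x^(q^g)] but not in [F_q]. *)

From HB Require Import structures.
From mathcomp Require Import all_boot all_order all_algebra all_field.
From mathcomp Require Import cyclic zify.
Import GRing.Theory.
Local Open Scope ring_scope.

Lemma fixed_exprX_mul (R : ringType) (w : R) (q m k : nat) :
  w ^+ (q ^ m) = w -> w ^+ (q ^ (k * m)) = w.
Proof.
move=> wm; elim: k => [|k IHk]; first by rewrite mul0n expn0 expr1.
by rewrite mulSn expnD exprM wm IHk.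
Qed.

Lemma fixed_exprX_gcd {R : ringType} {w : R} {q s n : nat} : (0 < n)%N ->
  w ^+ (q ^ s) = w -> w ^+ (q ^ n) = w -> w ^+ (q ^ gcdn s n) = w.
Proof.
move=> n_gt0 ws wn; have [a _ /divnK Bez] := Bezoutr s n_gt0.
set g := gcdn s n in Bez *.
have wg_s : (w ^+ (q ^ g)) ^+ (q ^ s) = w ^+ (q ^ g).
  by rewrite -exprM mulnC exprM ws.
have w_Bez : w ^+ (q ^ (g + a * s)) = w by rewrite -Bez; exact: fixed_exprX_mul.
by rewrite -{2}w_Bez expnD exprM fixed_exprX_mul.
Qed.

Section FiniteExtension.

Variables (F : finFieldType) (L : fieldExtType F).

Lemma mem1v_expr_card (x : L) : (x \in 1%VS) = (x ^+ #|F| == x).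
Proof. by rewrite -[1%VS]/(1%AS : {vspace L}) Fermat's_little_theorem dimv1 expn1. Qed.

Lemma expr_card_dim (x : L) : x ^+ (#|F| ^ \dim {:L}) = x.
Proof.
by apply/eqP; rewrite -[{:L}%VS]/({:L}%AS : {vspace L}) -Fermat's_little_theorem memvf.
Qed.

Lemma exists_prim_root_card :
  exists z : L, (#|F| ^ \dim {:L}).-1.-primitive_root z.
Proof.
pose finL := FinFieldExtType L.
have card_finL : #|finL| = (#|F| ^ \dim {:L})%N.
  by have := card_vspace (fullv : {vspace finvect_type L}); rewrite card_vspacef.
have finL_gt1 := finNzRing_gt1 finL.
have : has (#|finL|.-1).-primitive_root (enum (predC1 (0 : finL))).
  apply: has_prim_root.
  - by rewrite -subn1 subn_gt0.
  - apply/allP => x; rewrite mem_enum /= => x_neq0; rewrite unity_rootE.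
    apply/eqP/(mulIf x_neq0); rewrite mul1r -exprSr prednK ?(ltnW finL_gt1) //.
    by rewrite card_finL expr_card_dim.
  - exact: enum_uniq.
  - by rewrite -cardE cardC1.
by case/hasP=> z _; rewrite card_finL; exists z.
Qed.

Lemma exists_fixed_notin1v (d : nat) : (1 < d)%N -> (d %| \dim {:L})%N ->
  exists2 w : L, w ^+ (#|F| ^ d) = w & w \notin 1%VS.
Proof.
move=> d_gt1 d_dvd_n; have [z z_prim] := exists_prim_root_card.
have q_gt1 : (1 < #|F|)%N := finNzRing_gt1 F.
have q_lt_qd : (#|F| < #|F| ^ d)%N by rewrite -{1}(expn1 #|F|) ltn_exp2l.
have dvd_orders : ((#|F| ^ d).-1 %| (#|F| ^ \dim {:L}).-1)%N.
  by rewrite -(divnK d_dvd_n) mulnC expnM dvdn_pred_predX.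
have w_prim := dvdn_prim_root z_prim dvd_orders; set w := z ^+ _ in w_prim.
have w_neq0 : w != 0.
  apply/eqP=> w_eq0; move: (prim_expr_order w_prim).
  rewrite w_eq0 expr0n -subn1 subn_eq0 leqNgt (ltn_trans q_gt1 q_lt_qd) /=.
  by move/eqP; rewrite eq_sym oner_eq0.
exists w.
  by rewrite -(prednK (ltn_trans (ltnW q_gt1) q_lt_qd)) exprS prim_expr_order ?mulr1.
rewrite mem1v_expr_card; apply: contraTN q_lt_qd => /eqP w_fixed.
have : w ^+ #|F|.-1 = 1.
  by apply: (mulfI w_neq0); rewrite mulr1 -exprS prednK ?(ltnW q_gt1).
move/eqP; rewrite -(prim_order_dvd w_prim) => /dvdn_leq.
rewrite -!subn1 subn_gt0 => /(_ q_gt1).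
by move: (#|F| ^ d)%N => qd; lia.
Qed.

(* Raising to the power [#|F| ^ (n - r1)] inverts [x |-> x ^+ (#|F| ^ r1)]. *)
Lemma fixed_exprX_sub (r1 r2 : nat) (w : L) :
  (r1 <= r2)%N -> (r1 <= \dim {:L})%N ->
  w ^+ (#|F| ^ r1) = w ^+ (#|F| ^ r2) <-> w ^+ (#|F| ^ (r2 - r1)) = w.
Proof.
move=> r12 r1_le_n; have r2E : (#|F| ^ r2 = #|F| ^ (r2 - r1) * #|F| ^ r1)%N.
  by rewrite -expnD subnK.
split=> [w12|w_fixed]; last by rewrite r2E exprM w_fixed.
have e1 : (#|F| ^ r1 * #|F| ^ (\dim {:L} - r1) = #|F| ^ \dim {:L})%N.
  by rewrite -expnD subnKC.
have e2 : (#|F| ^ r2 * #|F| ^ (\dim {:L} - r1) = #|F| ^ (r2 - r1) * #|F| ^ \dim {:L})%N.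
  by rewrite -!expnD; congr (_ ^ _)%N; lia.
by have := expr_card_dim w; rewrite -e1 exprM w12 -exprM e2 exprM expr_card_dim.
Qed.

Lemma fixed_in1v_coprime (s : nat) : (0 < \dim {:L})%N ->
  (forall u : L, u != 0 -> u ^+ (#|F| ^ s) = u -> u \in 1%VS) <->
  gcdn s (\dim {:L}) = 1%N.
Proof.
move=> n_gt0; split=> [fixed_in1 | coprime_sn u _ us].
  apply/eqP; rewrite eqn_leq gcdn_gt0 n_gt0 orbT andbT leqNgt.
  apply/negP => g_gt1.
  have [w wg w_notin1] := exists_fixed_notin1v _ g_gt1 (dvdn_gcdr s _).
  have ws : w ^+ (#|F| ^ s) = w.
    by rewrite -(divnK (dvdn_gcdl s (\dim {:L}))); exact: fixed_exprX_mul.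
  have w_neq0 : w != 0 by apply: contraNneq w_notin1 => ->; exact: mem0v.
  by move: w_notin1; rewrite fixed_in1.
rewrite mem1v_expr_card; apply/eqP.
by have := fixed_exprX_gcd n_gt0 us (expr_card_dim u); rewrite coprime_sn expn1.
Qed.

End FiniteExtension.

Arguments fixed_exprX_sub {F L r1 r2 w}.
Arguments fixed_in1v_coprime {F L s}.

Lemma binomial_quot_eq_exprA (R : fieldType) (a b y z : R) (A B : nat) :
  b != 0 -> y != 0 -> z != 0 ->
  ((a * y ^+ A + b * y ^+ B) / y ^+ A == (a * z ^+ A + b * z ^+ B) / z ^+ A) =
  ((y / z) ^+ A == (y / z) ^+ B).
Proof.
move=> b_neq0 y_neq0 z_neq0.
have quotE x : x != 0 -> (a * x ^+ A + b * x ^+ B) / x ^+ A = a + b * (x ^+ B / x ^+ A).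
  by move=> x_neq0; rewrite mulrDl mulfK ?expf_neq0 // mulrA.
rewrite !quotE // (inj_eq (addrI a)) (inj_eq (mulfI b_neq0)) !expr_div_n.
by rewrite !eqr_div ?expf_neq0 // eq_sym mulrC.
Qed.

Lemma binomial_quot_eq {R : fieldType} {a b y z : R} {A B T : nat} :
  a != 0 -> b != 0 -> y != 0 -> z != 0 -> T = A \/ T = B ->
  (a * y ^+ A + b * y ^+ B) / y ^+ T = (a * z ^+ A + b * z ^+ B) / z ^+ T <->
  (y / z) ^+ A = (y / z) ^+ B.
Proof.
move=> a_neq0 b_neq0 y_neq0 z_neq0 [->|->]; rewrite !(rwP eqP).
  by rewrite binomial_quot_eq_exprA.
by rewrite (addrC (a * _)) (addrC (a * _)) binomial_quot_eq_exprA // eq_sym.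
Qed.

Lemma scattered_linbinomialE (F : fieldType) (L : fieldExtType F)
    (q t r1 r2 : nat) (a1 a2 : L) :
  a1 != 0 -> a2 != 0 -> t = r1 \/ t = r2 ->
  scattered q t (linbinomial q r1 r2 a1 a2) <->
  (forall u : L, u != 0 -> u ^+ (q ^ r1) = u ^+ (q ^ r2) -> u \in 1%VS).
Proof.
move=> a1_neq0 a2_neq0 t_r.
have qt : (q ^ t = q ^ r1 \/ q ^ t = q ^ r2)%N by case: t_r => ->; [left | right].
have hornerS y :
    (linbinomial q r1 r2 a1 a2).[y] = a1 * y ^+ (q ^ r1) + a2 * y ^+ (q ^ r2).
  by rewrite hornerD !hornerZ !hornerXn.
split=> [scat u u_neq0 u12 | fixed_in1 y z y_neq0 z_neq0].
  rewrite -[u]divr1; apply: scat => //; first exact: oner_neq0.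
  rewrite !hornerS.
  by apply/(binomial_quot_eq a1_neq0 a2_neq0 u_neq0 (oner_neq0 _) qt); rewrite divr1.
rewrite !hornerS => /(binomial_quot_eq a1_neq0 a2_neq0 y_neq0 z_neq0 qt).
by apply: fixed_in1; rewrite mulf_neq0 ?invr_eq0.
Qed.

Theorem mainTheorem8 (F : finFieldType) (L : fieldExtType F)
  (p k q n r1 r2 : nat) (a1 a2 : L) :
  prime p -> odd p -> (0 < k)%N -> q = (p ^ k)%N -> #|F| = q ->
  \dim (fullv : {vspace L}) = n ->
  (0 < r1)%N -> (r1 < r2)%N -> (r2 < n)%N ->
  a1 != 0 -> a2 != 0 ->
  a2 ^+ (q ^ r1 - 1) = 1 ->
  forall t : nat, t = r1 \/ t = r2 ->
    (scattered q t (linbinomial q r1 r2 a1 a2) <-> gcdn (r2 - r1) n = 1%N).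
Proof.
move=> _ _ _ _ <- <- _ r12 r2_lt_n a1_neq0 a2_neq0 _ t t_r.
have r1_le_n : (r1 <= \dim {:L})%N by rewrite ltnW // (ltn_trans r12).
have n_gt0 : (0 < \dim {:L})%N by rewrite (leq_ltn_trans _ r2_lt_n).
rewrite scattered_linbinomialE //.
apply: (iff_trans _ (fixed_in1v_coprime n_gt0)).
by split=> fixed_in1 u u_neq0 /(fixed_exprX_sub (ltnW r12) r1_le_n); apply: fixed_in1.
Qed.
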